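(* Let $M_\sharp\in\mathbb{R}^{d_1\times d_2}$ have rank $r$, let $M_\sharp=U\Lambda V^\top$ be a compact singular value decomposition ($U\in\mathbb{R}^{d_1\times r}$, $V\in\mathbb{R}^{d_2\times r}$ with orthonormal columns, $\Lambda$ diagonal $r\times r$ with positive entries), and set $X_\sharp=U\sqrt\Lambda$, $Y_\sharp=\sqrt\Lambda V^\top$. Let $$\mathcal{D}^*(M_\sharp)=\{(X_\sharp A,A^{-1}Y_\sharp):A\in GL(r)\}.$$ Fix $\nu>0$. Then for all $X\in\mathbb{R}^{d_1\times r}$, $Y\in\mathbb{R}^{r\times d_2}$ satisfying $$\max\{\|X-X_\sharp\|_F,\|Y-Y_\sharp\|_F\}\le\nu\sqrt{\sigma_r(M_\sharp)},\qquad \mathrm{dist}\big((X,Y),\mathcal{D}^*(M_\sharp)\big)\le\frac{\sqrt{\sigma_r(M_\sharp)}}{1+2(1+\sqrt2)\nu},$$ we have $$\|XY-M_\sharp\|_F\ge\frac{\sqrt{\sigma_r(M_\sharp)}}{2+4(1+\sqrt2)\nu}\cdot\mathrm{dist}\big((X,Y),\mathcal{D}^*(M_\sharp)\big).$$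
   Context: $\sigma_r(M)$ is the $r$-th largest singular value. $GL(r)$ is the set of invertible $r\times r$ matrices. The distance is $\mathrm{dist}((X,Y),\mathcal{D}^*(M_\sharp))=\inf_{A\in GL(r)}\sqrt{\|X-X_\sharp A\|_F^2+\|Y-A^{-1}Y_\sharp\|_F^2}$. *)

From HB Require Import structures.
From mathcomp Require Import all_boot all_order all_algebra.
Set Implicit Arguments. Unset Strict Implicit. Unset Printing Implicit Defensive.
Import Order.TTheory GRing.Theory Num.Theory.
Local Open Scope ring_scope.

Definition frob2 (R : rcfType) (m n : nat) (A : 'M[R]_(m, n)) : R :=
  \sum_(i < m) \sum_(j < n) A i j ^+ 2.
Definition frob (R : rcfType) (m n : nat) (A : 'M[R]_(m, n)) : R :=
  Num.sqrt (frob2 A).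

Definition is_compact_svd (R : rcfType) (d1 d2 r : nat) (M : 'M[R]_(d1, d2))
    (U : 'M[R]_(d1, r)) (lam : 'rV[R]_r) (V : 'M[R]_(d2, r)) : Prop :=
  [/\ U^T *m U = 1%:M, V^T *m V = 1%:M, (forall i, 0 < lam 0 i)
    & M = U *m diag_mx lam *m V^T].

Definition sqrt_diag (R : rcfType) (r : nat) (lam : 'rV[R]_r) : 'M[R]_r :=
  diag_mx (map_mx Num.sqrt lam).

Definition Xsharp (R : rcfType) (d1 r : nat) (U : 'M[R]_(d1, r)) (lam : 'rV[R]_r)
  : 'M[R]_(d1, r) := U *m sqrt_diag lam.
Definition Ysharp (R : rcfType) (d2 r : nat) (V : 'M[R]_(d2, r)) (lam : 'rV[R]_r)
  : 'M[R]_(r, d2) := sqrt_diag lam *m V^T.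

(* sigma_r(M) for M with compact SVD of rank r: the r-th largest singular
   value, i.e. the smallest diagonal entry of Lambda. *)
Definition is_sigma_r (R : rcfType) (r : nat) (lam : 'rV[R]_r) (s : R) : Prop :=
  (exists i, lam 0 i = s) /\ (forall i, s <= lam 0 i).

(* The quantity whose infimum over A in GL(r) defines the distance to D*(M). *)
Definition dist_term (R : rcfType) (d1 d2 r : nat) (Xs : 'M[R]_(d1, r))
    (Ys : 'M[R]_(r, d2)) (X : 'M[R]_(d1, r)) (Y : 'M[R]_(r, d2)) (A : 'M[R]_r) : R :=
  Num.sqrt (frob2 (X - Xs *m A) + frob2 (Y - invmx A *m Ys)).

Definition is_dist (R : rcfType) (d1 d2 r : nat) (Xs : 'M[R]_(d1, r))
    (Ys : 'M[R]_(r, d2)) (X : 'M[R]_(d1, r)) (Y : 'M[R]_(r, d2)) (d : R) : Prop :=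
  (forall A : 'M[R]_r, A \in unitmx -> d <= dist_term Xs Ys X Y A) /\
  (forall e : R, (forall A : 'M[R]_r, A \in unitmx -> e <= dist_term Xs Ys X Y A) -> e <= d).

From HB Require Import structures.
From mathcomp Require Import all_boot all_order all_algebra.
From mathcomp Require Import ring lra.
From Stdlib Require Import Classical.
Import Order.TTheory GRing.Theory Num.Theory.
Local Open Scope ring_scope.

(* Write a := sqrt(sigma_r), S := sqrt(Lambda), X1 := U^T X and Y1 := Y V.
   The proof has two halves.
   (1) Conditioning: every matrix B satisfies |X1 B| >= a/(2w) |B| and
       |Y1^T B| >= a/(2w) |B|, for any w >= 1 + 4 nu (the theorem's weight
       w = 1 + 2 (1 + sqrt 2) nu is one such choice).  For nu <= 3/4 this is a
       perturbation of |S B| >= a |B|; for larger nu one uses an almost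
       optimal A0 in GL(r): P := S A0 and Q := A0^-1 S satisfy
       Q S^-2 P = 1 and are close to X1 and S, which bounds P (and hence X1)
       from below.
   (2) Error decomposition: with the witness A := S^-1 X1, the squared
       distance term splits orthogonally into |X - U X1|^2,
       |X1^-1 (X1 Y1 - S^2)|^2 and |Y - Y1 V^T|^2, while |XY - M|^2 splits
       into |X1 Y1 - S^2|^2 + |X1 (Y - Y1 V^T)|^2 + |(X - U X1) Y|^2; the
       conditioning bound compares the pieces term by term. *)

Set Implicit Arguments. Unset Strict Implicit. Unset Printing Implicit Defensive.

Section Frobenius.
Variable R : rcfType.

Lemma sum_cauchy_schwarz (I : finType) (f g : I -> R) :
  (\sum_i f i * g i) ^+ 2 <= (\sum_i f i ^+ 2) * (\sum_i g i ^+ 2).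
Proof.
have sqr_diff i j : (f i * g j - f j * g i) ^+ 2 =
    f i ^+ 2 * g j ^+ 2 + f j ^+ 2 * g i ^+ 2 - 2 * ((f i * g i) * (f j * g j)).
  by ring.
have lagrange : \sum_i \sum_j (f i * g j - f j * g i) ^+ 2 =
    2 * ((\sum_i f i ^+ 2) * (\sum_i g i ^+ 2) - (\sum_i f i * g i) ^+ 2).
  rewrite expr2 !big_distrlr /=.
  under eq_bigr do under eq_bigr do rewrite sqr_diff.
  under eq_bigr do rewrite sumrB big_split /=.
  rewrite sumrB big_split /= (exchange_big _ _ _ _ _ (fun i j => f i ^+ 2 * g j ^+ 2)).
  have cross : \sum_i \sum_j 2 * (f i * g i * (f j * g j)) =
      2 * \sum_i \sum_j (f i * g i * (f j * g j)).
    by rewrite mulr_sumr; apply: eq_bigr => i _; rewrite mulr_sumr.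
  by rewrite cross; ring.
have : 0 <= \sum_i \sum_j (f i * g j - f j * g i) ^+ 2.
  by apply: sumr_ge0 => i _; apply: sumr_ge0 => j _; apply: sqr_ge0.
by rewrite lagrange; lra.
Qed.

Definition frob_dot m n (A B : 'M[R]_(m, n)) : R := \sum_i \sum_j A i j * B i j.

Lemma frob2_ge0 m n (A : 'M[R]_(m, n)) : 0 <= frob2 A.
Proof. by apply: sumr_ge0 => i _; apply: sumr_ge0 => j _; apply: sqr_ge0. Qed.

Lemma frob_ge0 m n (A : 'M[R]_(m, n)) : 0 <= frob A.
Proof. exact: sqrtr_ge0. Qed.

Lemma frob2E m n (A : 'M[R]_(m, n)) : frob2 A = frob A ^+ 2.
Proof. by rewrite /frob sqr_sqrtr // frob2_ge0. Qed.

Lemma frob_le_of_sqr m n (A : 'M[R]_(m, n)) x :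
  0 <= x -> frob2 A <= x ^+ 2 -> frob A <= x.
Proof. by move=> x0 h; rewrite /frob -(ger0_norm x0) -sqrtr_sqr ler_wsqrtr. Qed.

Lemma frob2D m n (A B : 'M[R]_(m, n)) :
  frob2 (A + B) = frob2 A + frob2 B + 2 * frob_dot A B.
Proof.
rewrite /frob2 /frob_dot mulr_sumr -!big_split /=; apply: eq_bigr => i _.
rewrite mulr_sumr -!big_split /=; apply: eq_bigr => j _; rewrite mxE; ring.
Qed.

Lemma frob_dot_tr m n (A B : 'M[R]_(m, n)) : frob_dot A B = \tr (A^T *m B).
Proof.
rewrite /frob_dot /mxtrace exchange_big; apply: eq_bigr => j _; rewrite mxE.
by apply: eq_bigr => i _; rewrite mxE.
Qed.

Lemma frob_dot_le m n (A B : 'M[R]_(m, n)) : frob_dot A B <= frob A * frob B.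
Proof.
have cs : frob_dot A B ^+ 2 <= frob2 A * frob2 B.
  rewrite /frob_dot /frob2 !(pair_bigA _ (fun i j => _)) /=.
  exact: (sum_cauchy_schwarz (fun p : 'I_m * 'I_n => A p.1 p.2) (fun p => B p.1 p.2)).
rewrite !frob2E -exprMn in cs.
have : 0 <= frob A * frob B by rewrite mulr_ge0 // frob_ge0.
nra.
Qed.

Lemma frobD m n (A B : 'M[R]_(m, n)) : frob (A + B) <= frob A + frob B.
Proof.
apply: frob_le_of_sqr; first by rewrite addr_ge0 // frob_ge0.
rewrite frob2D !frob2E; have := frob_dot_le A B; nra.
Qed.

Lemma frobN m n (A : 'M[R]_(m, n)) : frob (- A) = frob A.
Proof.
rewrite /frob /frob2; congr Num.sqrt.
by apply: eq_bigr => i _; apply: eq_bigr => j _; rewrite mxE sqrrN.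
Qed.

Lemma frobB m n (A B : 'M[R]_(m, n)) : frob (A - B) <= frob A + frob B.
Proof. by rewrite -(frobN B) frobD. Qed.

Lemma frob_sub_tri m n (Z P Q : 'M[R]_(m, n)) :
  frob (P - Q) <= frob (Z - Q) + frob (Z - P).
Proof.
have -> : P - Q = (Z - Q) - (Z - P) by rewrite opprB [RHS]addrC -[RHS]addrA addKr.
exact: frobB.
Qed.

Lemma frob2_trmx m n (A : 'M[R]_(m, n)) : frob2 A^T = frob2 A.
Proof.
rewrite /frob2 exchange_big; apply: eq_bigr => i _; apply: eq_bigr => j _.
by rewrite mxE.
Qed.

Lemma frob_trmx m n (A : 'M[R]_(m, n)) : frob A^T = frob A.
Proof. by rewrite /frob frob2_trmx. Qed.

Lemma frob_trmxB m n (A B : 'M[R]_(m, n)) : frob (A^T - B^T) = frob (A - B).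
Proof. by rewrite -linearB /= frob_trmx. Qed.

Lemma frob_mul m n p (A : 'M[R]_(m, n)) (B : 'M[R]_(n, p)) :
  frob (A *m B) <= frob A * frob B.
Proof.
apply: frob_le_of_sqr; first by rewrite mulr_ge0 // frob_ge0.
rewrite exprMn -!frob2E /frob2 big_distrl /=; apply: ler_sum => i _.
rewrite (exchange_big _ _ _ _ _ (fun k j => B k j ^+ 2)) /= big_distrr /=.
apply: ler_sum => j _; rewrite mxE.
exact: (sum_cauchy_schwarz (fun k => A i k) (fun k => B k j)).
Qed.

Lemma frob_eq0 m n (B : 'M[R]_(m, n)) : frob B = 0 -> B = 0.
Proof.
move=> h; have h2 : frob2 B = 0 by rewrite frob2E h expr0n.
apply/matrixP => i j; rewrite mxE.
have hi : \sum_j B i j ^+ 2 = 0.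
  move: h2; rewrite /frob2 => /psumr_eq0P; apply => // i' _.
  by apply: sumr_ge0 => j' _; apply: sqr_ge0.
have /eqP : B i j ^+ 2 = 0.
  by move: hi => /psumr_eq0P; apply => // j' _; apply: sqr_ge0.
by rewrite sqrf_eq0 => /eqP.
Qed.

Lemma frob2_orth m n (A B : 'M[R]_(m, n)) : A^T *m B = 0 ->
  frob2 (A + B) = frob2 A + frob2 B.
Proof. by move=> h; rewrite frob2D frob_dot_tr h mxtrace0 mulr0 addr0. Qed.

Lemma frob2_dot m n (A : 'M[R]_(m, n)) : frob2 A = frob_dot A A.
Proof. by apply: eq_bigr => i _; apply: eq_bigr => j _; rewrite expr2. Qed.

Lemma frob2_isoL m n k (U : 'M[R]_(m, n)) (Z : 'M[R]_(n, k)) :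
  U^T *m U = 1%:M -> frob2 (U *m Z) = frob2 Z.
Proof.
by move=> hU; rewrite !frob2_dot !frob_dot_tr trmx_mul mulmxA -(mulmxA _ U^T) hU mulmx1.
Qed.

Lemma frob2_split_cols m n k (U : 'M[R]_(m, n)) (Z : 'M[R]_(m, k)) :
  U^T *m U = 1%:M -> frob2 Z = frob2 (U^T *m Z) + frob2 (Z - U *m (U^T *m Z)).
Proof.
move=> hU; rewrite -(frob2_isoL (U^T *m Z) hU) -frob2_orth; first by rewrite addrC subrK.
rewrite trmx_mul mulmxBr -!mulmxA (mulmxA U^T U) hU mul1mx.
by rewrite trmx_mul mulmxA -mulmxA subrr.
Qed.

Lemma frob2_split_rows m n k (V : 'M[R]_(m, n)) (Z : 'M[R]_(k, m)) :
  V^T *m V = 1%:M -> frob2 Z = frob2 (Z *m V) + frob2 (Z - Z *m V *m V^T).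
Proof.
move=> hV; rewrite -frob2_trmx (frob2_split_cols Z^T hV) -(frob2_trmx (Z *m V)).
by rewrite -(frob2_trmx (Z - _)) !trmx_mul !linearB /= !trmx_mul trmxK mulmxA.
Qed.

Lemma frob_contract_cols m n k (U : 'M[R]_(m, n)) (Z : 'M[R]_(m, k)) :
  U^T *m U = 1%:M -> frob (U^T *m Z) <= frob Z.
Proof.
by move=> hU; rewrite /frob ler_wsqrtr // (frob2_split_cols Z hU) lerDl frob2_ge0.
Qed.

Lemma frob_contract_rows m n k (V : 'M[R]_(m, n)) (Z : 'M[R]_(k, m)) :
  V^T *m V = 1%:M -> frob (Z *m V) <= frob Z.
Proof.
by move=> hV; rewrite /frob ler_wsqrtr // (frob2_split_rows Z hV) lerDl frob2_ge0.
Qed.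

End Frobenius.

Section SingularValueBounds.
Variables (R : rcfType) (n : nat).

(* [sigma_min_ge Z m]: m is a lower bound for the smallest singular value of
   the square matrix Z, expressed without spectral theory. *)
Definition sigma_min_ge (Z : 'M[R]_n) (m : R) : Prop :=
  forall k (B : 'M[R]_(n, k)), m * frob B <= frob (Z *m B).

Definition op_norm_le (Z : 'M[R]_n) (b : R) : Prop :=
  forall k (B : 'M[R]_(n, k)), frob (Z *m B) <= b * frob B.

Lemma sigma_min_ge_le (Z : 'M[R]_n) m m' :
  sigma_min_ge Z m -> m' <= m -> sigma_min_ge Z m'.
Proof.
move=> hZ le_m k B; apply: le_trans (hZ k B).
by apply: ler_wpM2r => //; exact: frob_ge0.
Qed.

Lemma sigma_min_ge_perturb (P Z : 'M[R]_n) m t :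
  sigma_min_ge P m -> frob (Z - P) <= t -> sigma_min_ge Z (m - t).
Proof.
move=> hP hZP k B.
have split_PB : P *m B = Z *m B - (Z - P) *m B by rewrite mulmxBl opprB addrC subrK.
have := frobB (Z *m B) ((Z - P) *m B); rewrite -split_PB.
have := hP k B; have := frob_mul (Z - P) B; have := frob_ge0 B.
nra.
Qed.

Lemma sigma_min_ge_diag (c : 'rV[R]_n) a :
  0 <= a -> (forall i, a ^+ 2 <= c 0 i ^+ 2) -> sigma_min_ge (diag_mx c) a.
Proof.
move=> a0 hc k B; rewrite /frob -(ger0_norm a0) -sqrtr_sqr -sqrtrM ?sqr_ge0 //.
apply: ler_wsqrtr; rewrite mul_diag_mx /frob2 mulr_sumr; apply: ler_sum => i _.
rewrite mulr_sumr; apply: ler_sum => j _; rewrite mxE exprMn.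
by apply: ler_wpM2r; [exact: sqr_ge0 | exact: hc].
Qed.

Lemma op_norm_le_diag (c : 'rV[R]_n) b :
  0 <= b -> (forall i, c 0 i ^+ 2 <= b ^+ 2) -> op_norm_le (diag_mx c) b.
Proof.
move=> b0 hc k B; rewrite /frob -(ger0_norm b0) -sqrtr_sqr -sqrtrM ?sqr_ge0 //.
apply: ler_wsqrtr; rewrite mul_diag_mx /frob2 mulr_sumr; apply: ler_sum => i _.
rewrite mulr_sumr; apply: ler_sum => j _; rewrite mxE exprMn.
by apply: ler_wpM2r; [exact: sqr_ge0 | exact: hc].
Qed.

(* If Q Sinv Sinv P = 1 where S Sinv = 1, |Sinv| <= 1/a and Q is
   within g of S, then P is bounded below by a^2/(a+g): writing
   B = Sinv (P B) + (Q - S) Sinv Sinv (P B) gives |B| <= (a+g)/a^2 |P B|. *)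
Lemma sigma_min_ge_factor (S Sinv P Q : 'M[R]_n) a g :
  0 < a -> op_norm_le Sinv a^-1 -> S *m Sinv = 1%:M ->
  Q *m Sinv *m Sinv *m P = 1%:M -> frob (Q - S) <= g ->
  sigma_min_ge P (a ^+ 2 / (a + g)).
Proof.
move=> a0 hSinv hS hQP hQS k B.
set W := P *m B.
have g0 : 0 <= g by apply: le_trans hQS; exact: frob_ge0.
have decB : B = Sinv *m W + (Q - S) *m (Sinv *m (Sinv *m W)).
  rewrite mulmxBl !mulmxA hS mul1mx addrC subrK /W.
  by rewrite -!mulmxA !(mulmxA Q) (mulmxA (Q *m Sinv)) (mulmxA _ P) hQP mul1mx.
have ai0 : 0 <= a^-1 by rewrite invr_ge0 ltW.
have second_term : frob ((Q - S) *m (Sinv *m (Sinv *m W))) <= g * (a^-1 * (a^-1 * frob W)).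
  apply: le_trans (frob_mul _ _) _; apply: ler_pM; rewrite ?frob_ge0 //.
  exact: le_trans (hSinv _ _) (ler_wpM2l ai0 (hSinv _ W)).
have boundB : frob B <= a^-1 * frob W + g * (a^-1 * (a^-1 * frob W)).
  by rewrite {1}decB; apply: le_trans (frobD _ _) (lerD (hSinv _ W) second_term).
have ag0 : 0 < a + g by rewrite ltr_wpDr.
rewrite mulrAC ler_pdivrMr //; apply: le_trans (ler_wpM2l (sqr_ge0 a) boundB) _.
suff -> : a ^+ 2 * (a^-1 * frob W + g * (a^-1 * (a^-1 * frob W))) = frob W * (a + g) by [].
by field; rewrite gt_eqF.
Qed.

Lemma sigma_min_ge_unit (Z : 'M[R]_n) m :
  0 < m -> sigma_min_ge Z m -> Z \in unitmx.
Proof.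
move=> m0 hZ; rewrite -row_full_unit -cokermx_eq0; apply/eqP/frob_eq0.
apply/eqP; rewrite eq_le frob_ge0 andbT.
have := hZ _ (cokermx Z); rewrite mulmx_coker.
have -> : frob (0 : 'M[R]_n) = 0.
  by rewrite /frob /frob2 big1 ?sqrtr0 // => i _; rewrite big1 // => j _; rewrite mxE expr0n.
by move=> h; rewrite -(ler_pM2l m0) mulr0.
Qed.

Lemma sigma_min_ge_sqr (Z : 'M[R]_n) m k (B : 'M[R]_(n, k)) :
  0 <= m -> sigma_min_ge Z m -> m ^+ 2 * frob2 B <= frob2 (Z *m B).
Proof.
move=> m0 hZ; have := hZ _ B; rewrite !frob2E -exprMn.
have : 0 <= m * frob B by rewrite mulr_ge0 // frob_ge0.
nra.
Qed.

End SingularValueBounds.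

Section Constants.
Variable R : rcfType.

(* The weight of the theorem dominates 1 + 4 nu, which is all the proof uses. *)
Lemma weight_ge (nu : R) : 0 < nu -> 1 + 4 * nu <= 1 + 2 * (1 + Num.sqrt 2) * nu.
Proof.
move=> nu0; have : Num.sqrt 1 <= Num.sqrt 2 :> R by apply: ler_wsqrtr; lra.
rewrite sqrtr1; nra.
Qed.

(* Conditioning constant when X1 is a small perturbation of S. *)
Lemma small_nu_bound (a nu w : R) :
  0 < a -> 0 <= nu -> nu <= 3 / 4 -> 1 + 4 * nu <= w -> a / (2 * w) <= a - nu * a.
Proof.
move=> a0 nu0 nu_small hw; rewrite ler_pdivrMr; last by lra.
have : 1 <= (1 - nu) * (2 * w) by nra.
nra.
Qed.

(* Conditioning constant obtained through the factorization P = S A0. *)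
Lemma large_nu_bound (a nu t w : R) :
  0 < a -> 3 / 4 < nu -> 0 <= t -> 1 + 4 * nu <= w -> t <= 5 * a / (4 * w) ->
  a / (2 * w) <= a ^+ 2 / (a + (nu * a + t)) - t.
Proof.
move=> a0 nu_large t0 hw ht.
have w4 : 4 <= w by lra.
have hwt : 4 * w * t <= 5 * a by move: ht; rewrite ler_pdivlMr ?mulr_gt0 //; lra.
have ht' : t <= 5 / 16 * a by nra.
have key : 7 * (a + (nu * a + t)) <= 4 * w * a by nra.
have g0 : 0 < a + (nu * a + t) by nra.
rewrite lerBrDr ler_pdivlMr //.
have -> : a / (2 * w) + t = (a + 2 * w * t) / (2 * w) by field; lra.
rewrite mulrAC ler_pdivrMr; last by lra.
have : a + 2 * w * t <= 7 / 2 * a by lra.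
nra.
Qed.

End Constants.

(* Small nu: perturb S;
   large nu: bound P from below by the factorization and perturb P. *)
Lemma sigma_min_ge_near_balanced (R : rcfType) n (S Sinv P Q Z : 'M[R]_n) a nu t w :
  0 < a -> 0 < nu -> 0 <= t -> 1 + 4 * nu <= w -> t <= 5 * a / (4 * w) ->
  sigma_min_ge S a -> op_norm_le Sinv a^-1 -> S *m Sinv = 1%:M ->
  Q *m Sinv *m Sinv *m P = 1%:M ->
  frob (Z - S) <= nu * a -> frob (Z - P) <= t -> frob (Q - S) <= nu * a + t ->
  sigma_min_ge Z (a / (2 * w)).
Proof.
move=> a0 nu0 t0 hw ht hS hSinv hSSinv hQP hZS hZP hQS.
have [nu_small | nu_large] := lerP nu (3 / 4).
  apply: sigma_min_ge_le (sigma_min_ge_perturb hS hZS) _.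
  exact: small_nu_bound (ltW nu0) nu_small hw.
have hP := sigma_min_ge_factor a0 hSinv hSSinv hQP hQS.
apply: sigma_min_ge_le (sigma_min_ge_perturb hP hZP) _.
exact: large_nu_bound.
Qed.

Section ErrorDecomposition.
Variables (R : rcfType) (d1 d2 r : nat) (U : 'M[R]_(d1, r)) (V : 'M[R]_(d2, r)).
Hypotheses (hU : U^T *m U = 1%:M) (hV : V^T *m V = 1%:M).

Lemma residual_decomposition (G : 'M[R]_r) (X : 'M[R]_(d1, r)) (Y : 'M[R]_(r, d2)) :
  frob2 (X *m Y - U *m G *m V^T) =
  frob2 (U^T *m X *m (Y *m V) - G) + frob2 (U^T *m X *m (Y - Y *m V *m V^T))
  + frob2 ((X - U *m (U^T *m X)) *m Y).
Proof.
set W := X *m Y - U *m G *m V^T.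
have UW : U^T *m W = U^T *m X *m Y - G *m V^T.
  by rewrite /W mulmxBr !mulmxA hU mul1mx.
have UWV : U^T *m W *m V = U^T *m X *m (Y *m V) - G.
  by rewrite UW mulmxBl -!mulmxA hV mulmx1.
have UW_perp : U^T *m W - U^T *m W *m V *m V^T = U^T *m X *m (Y - Y *m V *m V^T).
  by rewrite UWV UW mulmxBl [in RHS]mulmxBr !mulmxA opprB addrA subrK.
have W_perp : W - U *m (U^T *m W) = (X - U *m (U^T *m X)) *m Y.
  by rewrite UW mulmxBr /W !mulmxA mulmxBl opprB addrA subrK.
by rewrite (frob2_split_cols W hU) (frob2_split_rows (U^T *m W) hV) UW_perp UWV W_perp.
Qed.

Lemma witness_distance (S T : 'M[R]_r) (X : 'M[R]_(d1, r)) (Y : 'M[R]_(r, d2)) :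
  S \in unitmx -> U^T *m X \in unitmx ->
  dist_term (U *m S) (T *m V^T) X Y (invmx S *m (U^T *m X)) =
  Num.sqrt (frob2 (X - U *m (U^T *m X))
    + frob2 (invmx (U^T *m X) *m (U^T *m X *m (Y *m V) - S *m T))
    + frob2 (Y - Y *m V *m V^T)).
Proof.
move=> hS hX1; set X1 := U^T *m X; set A := invmx S *m X1.
have hA : A \in unitmx by rewrite unitmx_mul unitmx_inv hS.
have invA : invmx A = invmx X1 *m S.
  have AK : A *m (invmx X1 *m S) = 1%:M.
    by rewrite /A mulmxA -(mulmxA _ X1) mulmxV // mulmx1 mulVmx.
  by rewrite -[LHS]mulmx1 -AK mulKmx.
have XA : X - U *m S *m A = X - U *m X1 by rewrite /A -mulmxA (mulKVmx hS).
set Z := Y - invmx A *m (T *m V^T).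
have ZV : Z *m V = invmx X1 *m (X1 *m (Y *m V) - S *m T).
  rewrite /Z mulmxBl -[in LHS]mulmxA -(mulmxA (T)) hV mulmx1 invA.
  by rewrite [in RHS]mulmxBr mulKmx // !mulmxA.
have Z_perp : Z - Z *m V *m V^T = Y - Y *m V *m V^T.
  rewrite /Z !mulmxBl -[invmx A *m _ *m V]mulmxA -(mulmxA T) hV mulmx1 -[invmx A *m T *m V^T]mulmxA.
  by rewrite opprB addrA subrK.
by rewrite /dist_term XA (frob2_split_rows Z hV) Z_perp ZV addrA.
Qed.

Lemma witness_error_bound (S T : 'M[R]_r) (X : 'M[R]_(d1, r)) (Y : 'M[R]_(r, d2)) m :
  S \in unitmx -> 0 < m ->
  sigma_min_ge (U^T *m X) m -> sigma_min_ge (Y *m V)^T m ->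
  exists2 A, A \in unitmx &
    m * dist_term (U *m S) (T *m V^T) X Y A <= frob (X *m Y - U *m (S *m T) *m V^T).
Proof.
move=> hS m0 hX1 hY1.
have X1_unit := sigma_min_ge_unit m0 hX1.
exists (invmx S *m (U^T *m X)); first by rewrite unitmx_mul unitmx_inv hS.
rewrite witness_distance // -(ger0_norm (ltW m0)) -sqrtr_sqr -sqrtrM ?sqr_ge0 //.
rewrite /frob ler_wsqrtr // residual_decomposition.
set X1 := U^T *m X; set Y1 := Y *m V; set X2 := X - U *m X1; set Y2 := Y - Y1 *m V^T.
set N := X1 *m Y1 - S *m T.
have bound_X2 : m ^+ 2 * frob2 X2 <= frob2 (X2 *m Y).
  rewrite (frob2_split_rows (X2 *m Y) hV) -mulmxA -/Y1 -(frob2_trmx X2).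
  rewrite -(frob2_trmx (X2 *m Y1)) trmx_mul.
  apply: le_trans (sigma_min_ge_sqr _ (ltW m0) hY1) _.
  by rewrite lerDl frob2_ge0.
have bound_N : m ^+ 2 * frob2 (invmx X1 *m N) <= frob2 N.
  by have := sigma_min_ge_sqr (invmx X1 *m N) (ltW m0) hX1; rewrite mulKVmx.
have bound_Y2 : m ^+ 2 * frob2 Y2 <= frob2 (X1 *m Y2).
  exact: sigma_min_ge_sqr Y2 (ltW m0) hX1.
lra.
Qed.

End ErrorDecomposition.

Section BalancedFactors.
Variables (R : rcfType) (r : nat) (lam : 'rV[R]_r).
Hypothesis lam_gt0 : forall i, 0 < lam 0 i.

Definition inv_sqrt_diag : 'M[R]_r := diag_mx (\row_i (Num.sqrt (lam 0 i))^-1).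

Lemma sqrt_diagK : sqrt_diag lam *m inv_sqrt_diag = 1%:M.
Proof.
rewrite mulmx_diag -diag_const_mx; congr diag_mx; apply/rowP => j.
by rewrite !mxE mulfV // gt_eqF // sqrtr_gt0.
Qed.

Lemma inv_sqrt_diagK : inv_sqrt_diag *m sqrt_diag lam = 1%:M.
Proof.
rewrite mulmx_diag -diag_const_mx; congr diag_mx; apply/rowP => j.
by rewrite !mxE mulVf // gt_eqF // sqrtr_gt0.
Qed.

Lemma sqrt_diag_unit : sqrt_diag lam \in unitmx.
Proof. by case: (mulmx1_unit sqrt_diagK). Qed.

Lemma sqrt_diag_sqr : sqrt_diag lam *m sqrt_diag lam = diag_mx lam.
Proof.
rewrite mulmx_diag; congr diag_mx; apply/rowP => j.
by rewrite !mxE -expr2 sqr_sqrtr // ltW.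
Qed.

Lemma sqrt_diag_sigma_min a :
  0 <= a -> (forall i, a ^+ 2 <= lam 0 i) -> sigma_min_ge (sqrt_diag lam) a.
Proof.
move=> a0 ha; apply: sigma_min_ge_diag => // i.
by rewrite mxE sqr_sqrtr ?ha // ltW.
Qed.

Lemma inv_sqrt_diag_norm a :
  0 < a -> (forall i, a ^+ 2 <= lam 0 i) -> op_norm_le inv_sqrt_diag a^-1.
Proof.
move=> a0 ha; apply: op_norm_le_diag => [|i]; first by rewrite invr_ge0 ltW.
rewrite mxE !exprVn sqr_sqrtr; last exact: ltW.
by rewrite lef_pV2 ?ha // posrE // exprn_gt0.
Qed.

End BalancedFactors.

Lemma is_dist_approx (R : rcfType) d1 d2 r (Xs : 'M[R]_(d1, r)) (Ys : 'M[R]_(r, d2))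
    X Y d e :
  is_dist Xs Ys X Y d -> 0 < e ->
  exists2 A, A \in unitmx & dist_term Xs Ys X Y A <= d + e.
Proof.
move=> [_ d_glb] e0; apply: NNPP => no_A.
suff : d + e <= d by lra.
apply: d_glb => A hA; rewrite leNgt; apply/negP => hlt.
by apply: no_A; exists A => //; exact: ltW.
Qed.

Lemma dist_term_geX (R : rcfType) d1 d2 r (Xs : 'M[R]_(d1, r)) (Ys : 'M[R]_(r, d2))
    X Y A :
  frob (X - Xs *m A) <= dist_term Xs Ys X Y A.
Proof. by rewrite /dist_term /frob ler_wsqrtr // lerDl frob2_ge0. Qed.

Lemma dist_term_geY (R : rcfType) d1 d2 r (Xs : 'M[R]_(d1, r)) (Ys : 'M[R]_(r, d2))
    X Y A :
  frob (Y - invmx A *m Ys) <= dist_term Xs Ys X Y A.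
Proof. by rewrite /dist_term /frob ler_wsqrtr // lerDr frob2_ge0. Qed.

Section Conditioning.
Variables (R : rcfType) (d1 d2 r : nat).
Variables (U : 'M[R]_(d1, r)) (lam : 'rV[R]_r) (V : 'M[R]_(d2, r)).
Hypotheses (hU : U^T *m U = 1%:M) (hV : V^T *m V = 1%:M).
Hypothesis lam_gt0 : forall i, 0 < lam 0 i.

Lemma factors_well_conditioned (X : 'M[R]_(d1, r)) (Y : 'M[R]_(r, d2)) A0 a nu t w :
  0 < a -> (forall i, a ^+ 2 <= lam 0 i) -> 0 < nu -> 0 <= t ->
  1 + 4 * nu <= w -> t <= 5 * a / (4 * w) -> A0 \in unitmx ->
  frob (X - Xsharp U lam) <= nu * a -> frob (Y - Ysharp V lam) <= nu * a ->
  dist_term (Xsharp U lam) (Ysharp V lam) X Y A0 <= t ->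
  sigma_min_ge (U^T *m X) (a / (2 * w)) /\ sigma_min_ge (Y *m V)^T (a / (2 * w)).
Proof.
move=> a0 ha nu0 t0 hw ht hA0 hX hY hdist.
set S := sqrt_diag lam; set Sinv := inv_sqrt_diag lam.
set X1 := U^T *m X; set Y1 := Y *m V.
set P := S *m A0; set Q := invmx A0 *m S.
have hS := sqrt_diag_sigma_min lam_gt0 (ltW a0) ha.
have hSinv := inv_sqrt_diag_norm lam_gt0 a0 ha.
have X1S : frob (X1 - S) <= nu * a.
  have -> : X1 - S = U^T *m (X - U *m S) by rewrite mulmxBr mulmxA hU mul1mx.
  exact: le_trans (frob_contract_cols _ hU) hX.
have X1P : frob (X1 - P) <= t.
  have -> : X1 - P = U^T *m (X - U *m S *m A0) by rewrite mulmxBr !mulmxA hU mul1mx.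
  apply: le_trans (frob_contract_cols _ hU) (le_trans _ hdist); exact: dist_term_geX.
have Y1S : frob (Y1 - S) <= nu * a.
  have -> : Y1 - S = (Y - S *m V^T) *m V by rewrite mulmxBl -mulmxA hV mulmx1.
  exact: le_trans (frob_contract_rows _ hV) hY.
have Y1Q : frob (Y1 - Q) <= t.
  have -> : Y1 - Q = (Y - invmx A0 *m (S *m V^T)) *m V.
    by rewrite mulmxBl -!mulmxA hV mulmx1.
  apply: le_trans (frob_contract_rows _ hV) (le_trans _ hdist); exact: dist_term_geY.
have QS : frob (Q - S) <= nu * a + t by apply: le_trans (frob_sub_tri Y1 _ _) _; lra.
have PS : frob (P - S) <= nu * a + t by apply: le_trans (frob_sub_tri X1 _ _) _; lra.
have QP : Q *m Sinv *m Sinv *m P = 1%:M.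
  rewrite /Q /P !mulmxA -(mulmxA (invmx A0) S) (sqrt_diagK lam_gt0) mulmx1.
  by rewrite -(mulmxA (invmx A0) Sinv) (inv_sqrt_diagK lam_gt0) mulmx1 mulVmx.
have trS : S^T = S by exact: tr_diag_mx.
have trSinv : Sinv^T = Sinv by exact: tr_diag_mx.
split; first exact: sigma_min_ge_near_balanced a0 nu0 t0 hw ht hS hSinv
  (sqrt_diagK lam_gt0) QP X1S X1P QS.
apply: (sigma_min_ge_near_balanced (P := Q^T) (Q := P^T) a0 nu0 t0 hw ht hS hSinv
  (sqrt_diagK lam_gt0)).
- by rewrite -/Sinv -trSinv -!trmx_mul !mulmxA -(mulmxA _ S A0) QP trmx1.
- by rewrite -/S -[X in _ - X]trS frob_trmxB.
- by rewrite frob_trmxB.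
- by rewrite -/S -[X in _ - X]trS frob_trmxB.
Qed.

End Conditioning.

Theorem theorem4p5 (R : rcfType) (d1 d2 r : nat) (M : 'M[R]_(d1, d2))
    (U : 'M[R]_(d1, r)) (lam : 'rV[R]_r) (V : 'M[R]_(d2, r)) (nu s : R) :
  \rank M = r ->
  is_compact_svd M U lam V ->
  is_sigma_r lam s ->
  0 < nu ->
  forall (X : 'M[R]_(d1, r)) (Y : 'M[R]_(r, d2)) (d : R),
    is_dist (Xsharp U lam) (Ysharp V lam) X Y d ->
    Num.max (frob (X - Xsharp U lam)) (frob (Y - Ysharp V lam)) <= nu * Num.sqrt s ->
    d <= Num.sqrt s / (1 + 2 * (1 + Num.sqrt 2) * nu) ->
    Num.sqrt s / (2 + 4 * (1 + Num.sqrt 2) * nu) * d <= frob (X *m Y - M).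
Proof.
move=> _ [hU hV lam_gt0 ->] [[i0 s_def] s_min] nu0 X Y d hdist.
rewrite ge_max => /andP [hX hY].
set w := 1 + 2 * (1 + Num.sqrt 2) * nu => hd.
have hw : 1 + 4 * nu <= w := weight_ge nu0.
have -> : 2 + 4 * (1 + Num.sqrt 2) * nu = 2 * w by rewrite /w; ring.
have s0 : 0 < s by rewrite -s_def.
set a := Num.sqrt s.
have a0 : 0 < a by rewrite sqrtr_gt0.
have ha : forall i, a ^+ 2 <= lam 0 i by move=> i; rewrite sqr_sqrtr ?s_min // ltW.
have w0 : 0 < w by lra.
(* An almost optimal A0 lies within t <= 5a/(4w) of (X, Y). *)
have [A0 hA0 hA0d] := is_dist_approx hdist (divr_gt0 a0 (mulr_gt0 (ltr0n _ 4) w0)).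
have ht : dist_term (Xsharp U lam) (Ysharp V lam) X Y A0 <= 5 * a / (4 * w).
  apply: le_trans hA0d _; rewrite -/a in hd.
  have split5 : 5 * a / (4 * w) = a / w + a / (4 * w) by field; rewrite gt_eqF.
  by rewrite split5 lerD2r.
have [hX1 hY1] := factors_well_conditioned hU hV lam_gt0 a0 ha nu0 (sqrtr_ge0 _)
  hw ht hA0 hX hY (lexx _).
have [A hA bound] := witness_error_bound hU hV (sqrt_diag lam)
  (sqrt_diag_unit lam_gt0) (divr_gt0 a0 (mulr_gt0 (ltr0n _ 2) w0)) hX1 hY1.
rewrite -(sqrt_diag_sqr lam_gt0); apply: le_trans bound.
have [d_lb _] := hdist.
by apply: ler_wpM2l (d_lb A hA); rewrite divr_ge0 // ltW // mulr_gt0.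
Qed.
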